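(* Let $(i,j,t,u,v)$ be an arbitrary permutation of $(1,2,3,4,5)$. The monomials $x_i^2x_jx_t^3x_u^3x_v^3$ with $i<j$, and $x_i^3x_j^4x_t^3x_u^7x_v^7$ with $i<j<t$, are strictly inadmissible in $P_5$.
   Context: $P_k=\mathbb F_2[x_1,\dots,x_k]$, $\deg x_i=1$, with the standard action of the mod-2 Steenrod algebra $\mathcal A$. $\mathcal A_s$ is the sub-Hopf algebra generated by $Sq^i$, $0\le i\le2^s$, and $\mathcal A_s^+=\mathcal A^+\cap\mathcal A_s$. For a monomial $x$, $\nu_j(x)$ is the exponent of $x_j$, $\alpha_i(a)$ the $i$-th binary digit of $a$, $\omega(x)=(\omega_i(x))$ with $\omega_i(x)=\sum_j\alpha_{i-1}(\nu_j(x))$, $\sigma(x)=(\nu_1(x),\dots,\nu_k(x))$, both ordered left-lexicographically; for monomials of equal degree $u<v$ iff $\omega(u)<\omega(v)$, or $\omega(u)=\omega(v)$ and $\sigma(u)<\sigma(v)$. A monomial $u$ is strictly inadmissible if there exist monomials $v_1,\dots,v_r<u$ with $u+\sum_jv_j\in\mathcal A_{s-1}^+P_k$, where $s=\max\{i:\omega_i(u)>0\}$. *)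

From HB Require Import structures.
From mathcomp Require Import all_boot all_order all_algebra all_fingroup.
From mathcomp Require Import mpoly.
Set Implicit Arguments. Unset Strict Implicit. Unset Printing Implicit Defensive.
Import GRing.Theory.
Local Open Scope ring_scope.

(* P_k := F_2[x_1,...,x_k]; variables are indexed by 'I_k (x_{i+1} <-> i). *)
Notation P k := {mpoly 'F_2[k]}.

(* Sq^i on a monomial x^m, by the Cartan formula and Sq^e(x^a) = C(a,e) x^(a+e):
   Sq^i(x^m) = sum_{e_1+..+e_k = i} prod_j C(m_j,e_j) x^(m+e). *)
Definition SqMon (k i : nat) (m : 'X_{1..k}) : P k :=
  \sum_(e : {ffun 'I_k -> 'I_i.+1} | (\sum_(j < k) (e j : nat))%N == i)
     (\prod_(j < k) ('C(m j, e j))%:R) *: 'X_[[multinom (m j + e j)%N | j < k]].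

Definition Sq (k i : nat) (f : P k) : P k :=
  \sum_(m <- msupp f) f@_m *: SqMon i m.

Definition Sqword (k : nat) (w : seq nat) (f : P k) : P k :=
  foldr (fun i g => Sq i g) f w.

(* A_s^+ P_k : the image of the augmentation ideal of A_s (the subalgebra
   generated by Sq^i, 0 <= i <= 2^s) acting on P_k.  A_s^+ is spanned by the
   nonempty words in Sq^i with 1 <= i <= 2^s, so A_s^+ P_k is the F_2-span of
   the elements w(f), w such a word, f in P_k. *)
Inductive hitA (k s : nat) : P k -> Prop :=
  | hitA0 : hitA s 0
  | hitAD f g : hitA s f -> hitA s g -> hitA s (f + g)
  | hitAw (w : seq nat) (f : P k) :
      w != [::] -> all (fun i => (1 <= i <= 2 ^ s)%N) w ->
      hitA s (Sqword w f).

Definition alpha (i a : nat) : nat := odd (a %/ 2 ^ i).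

Definition omega (k : nat) (x : 'X_{1..k}) (i : nat) : nat :=
  (\sum_(j < k) alpha i.-1 (x j))%N.

Definition lexlt (start : nat) (a b : nat -> nat) : Prop :=
  exists i, (start <= i)%N /\ (forall l, (start <= l < i)%N -> a l = b l) /\ (a i < b i)%N.

Definition mono_lt (k : nat) (u v : 'X_{1..k}) : Prop :=
  lexlt 1 (omega u) (omega v) \/
  ((forall i, (1 <= i)%N -> omega u i = omega v i) /\
   lexlt 0 (fun j => nth 0%N (val u) j) (fun j => nth 0%N (val v) j)).

(* s = max{ i : omega_i(u) > 0 }  (omega_i(u) = 0 for i > deg u + 1) *)
Definition smax (k : nat) (u : 'X_{1..k}) : nat :=
  \max_(1 <= i < (mdeg u).+2 | (0 < omega u i)%N) i.

Definition strictly_inadmissible (k : nat) (u : 'X_{1..k}) : Prop :=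
  exists vs : seq 'X_{1..k},
    (forall v, v \in vs -> mdeg v = mdeg u /\ mono_lt v u) /\
    hitA (smax u).-1 ('X_[u] + \sum_(v <- vs) 'X_[v]).

(* the monomial x_{p 0}^{e 0} ... x_{p 4}^{e 4} for a permutation p of 'I_5 *)
Definition mon5 (p : 'S_5) (e : nat -> nat) : 'X_{1..5} :=
  [multinom e (((p^-1)%g j) : nat) | j < 5].

From mathcomp Require Import all_boot all_order all_algebra all_fingroup.
From mathcomp Require Import mpoly.
Set Implicit Arguments. Unset Strict Implicit. Unset Printing Implicit Defensive.
Import GRing.Theory.

(* Modulo 2,
     x_i^2 x_j x_t^3 x_u^3 x_v^3 = Sq^1(x_i x_j x_t^3 x_u^3 x_v^3) + smaller terms,
     x_i^3 x_j^4 x_t^3 x_u^7 x_v^7 = Sq^2(x_i^2 x_j^3 x_t^3 x_u^7 x_v^7)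
                                    + Sq^1(x_i^3 x_j^3 x_t^3 x_u^7 x_v^7) + smaller terms,
   and the two monomials have s = 2 and s = 3, so Sq^1, Sq^2 lie in A_(s-1).
   The permutation only relabels the variables, so these identities are checked
   once and for all on exponent lists.  Each "smaller" term either has a smaller
   weight vector, or the same weight vector and differs from u only at positions
   whose variables come after the first position where it is smaller; the
   hypotheses i < j (resp. i < j < t) are exactly what this needs. *)

Local Open Scope ring_scope.

Lemma SqX k i (m : 'X_{1..k}) : Sq i 'X_[m] = SqMon i m.
Proof. by rewrite /Sq msuppX big_seq1 mcoeffX eqxx scale1r. Qed.

Lemma addrr_F2 k (f : P k) : f + f = 0.
Proof. exact/addrr_pchar2/(rmorph_pchar (@mpolyC k _))/pchar_Fp. Qed.

Lemma natr_F2 n : n%:R = (odd n)%:R :> 'F_2.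
Proof. by rewrite -(Fp_nat_mod (erefl : prime 2)) modn2. Qed.

Lemma scale_natr_F2 k n (f : P k) : (n%:R : 'F_2) *: f = if odd n then f else 0.
Proof. by rewrite natr_F2; case: (odd n); rewrite ?scale1r ?scale0r. Qed.

Local Close Scope ring_scope.

Fixpoint bounded_lists (k n : nat) : seq (seq nat) :=
  if n is n'.+1 then [seq x :: l | x <- iota 0 k.+1, l <- bounded_lists k n']
  else [:: [::]].

Lemma mem_bounded_lists k n l :
  (l \in bounded_lists k n) = (size l == n) && all (fun x => x <= k) l.
Proof.
elim: n l => [|n IHn] l; first by case: l.
apply/allpairsP/idP => [[[y l'] [+ + ->]]|].
  by rewrite mem_iota ltnS IHn /= eqSS => -> /andP [-> ->].
case: l => [|x l] // /andP [/eqP [sz] /andP [xk lk]]; exists (x, l).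
by rewrite mem_iota ltnS xk IHn sz eqxx.
Qed.

Lemma uniq_bounded_lists k n : uniq (bounded_lists k n).
Proof.
elim: n => // n IHn; apply: allpairs_uniq => //; first exact: iota_uniq.
by move=> [x l] [y l'] _ _ /= [-> ->].
Qed.

Definition list_of_ffun n k (d : {ffun 'I_n -> 'I_k.+1}) : seq nat :=
  [seq (d a : nat) | a <- enum 'I_n].

Lemma nth_list_of_ffun n k (d : {ffun 'I_n -> 'I_k.+1}) (a : 'I_n) :
  nth 0 (list_of_ffun d) a = d a.
Proof. by rewrite (nth_map a) ?size_enum_ord // nth_ord_enum. Qed.

Lemma list_of_ffun_inj n k : injective (@list_of_ffun n k).
Proof.
move=> d1 d2 eq12; apply/ffunP => a; apply: val_inj.
by rewrite /= -!nth_list_of_ffun eq12.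
Qed.

Lemma perm_list_of_ffun n k :
  perm_eq [seq list_of_ffun d | d : {ffun 'I_n -> 'I_k.+1}] (bounded_lists k n).
Proof.
apply: uniq_perm; first by rewrite map_inj_uniq ?enum_uniq //; apply: list_of_ffun_inj.
  exact: uniq_bounded_lists.
move=> l; rewrite mem_bounded_lists; apply/mapP/andP => [[d _ ->]|[/eqP sz /allP lk]].
  by rewrite size_map size_enum_ord; split=> //; apply/allP => _ /mapP [a _ ->]; rewrite -ltnS.
have lt_l (a : 'I_n) : nth 0 l a < k.+1 by rewrite ltnS lk // mem_nth // sz.
exists [ffun a => Ordinal (lt_l a)]; first by rewrite mem_enum.
apply: (@eq_from_nth _ 0); first by rewrite size_map size_enum_ord.
move=> a; rewrite sz => lt_an.
by rewrite (nth_list_of_ffun _ (Ordinal lt_an)) ffunE.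
Qed.

Lemma sum_list_of_ffun (R : nmodType) n k (F : seq nat -> R) :
  (\sum_(d : {ffun 'I_n -> 'I_k.+1}) F (list_of_ffun d) =
   \sum_(l <- bounded_lists k n) F l)%R.
Proof. by rewrite -(perm_big _ (perm_list_of_ffun n k)) big_map big_enum. Qed.

Lemma sumn_mkseq f n : sumn (mkseq f n) = \sum_(a < n) f a.
Proof. by rewrite sumnE big_map -(big_mkord xpredT f) /index_iota subn0. Qed.

Lemma prodn_mkseq f n : foldr muln 1 (mkseq f n) = \prod_(a < n) f a.
Proof. by rewrite foldrE big_map -(big_mkord xpredT f) /index_iota subn0. Qed.

Definition mon_sum (p : 'S_5) (L : seq (seq nat)) : P 5 :=
  (\sum_(l <- L) 'X_[mon5 p (nth 0 l)])%R.

Lemma mon_sum_cons p l L :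
  mon_sum p (l :: L) =
  ('X_[mon5 p (nth 0 l)] + \sum_(v <- [seq mon5 p (nth 0 x) | x <- L]) 'X_[v])%R.
Proof. by rewrite /mon_sum big_cons big_map. Qed.

Lemma mon_sum_cat p L1 L2 : mon_sum p (L1 ++ L2) = (mon_sum p L1 + mon_sum p L2)%R.
Proof. exact: big_cat. Qed.

Lemma perm_mon_sum p L1 L2 : perm_eq L1 L2 -> mon_sum p L1 = mon_sum p L2.
Proof. exact: perm_big. Qed.

Fixpoint cancel_pairs (L : seq (seq nat)) : seq (seq nat) :=
  if L is l :: L' then
    let N := cancel_pairs L' in if l \in N then rem l N else l :: N
  else [::].

Lemma mon_sum_cancel_pairs p L : mon_sum p (cancel_pairs L) = mon_sum p L.
Proof.
elim: L => //= l L IHL; rewrite [RHS]big_cons -/(mon_sum p L) -IHL.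
case: ifP => [lN|_]; last by rewrite /mon_sum big_cons.
by rewrite {2}/mon_sum (perm_big _ (perm_to_rem lN)) big_cons addrA addrr_F2 add0r.
Qed.

(* Lists folded by [foldr]/[sumn] rather than big operators, which do not reduce:
   the concrete instances below are then decided by [vm_compute]. *)
Definition binom_prod (e l : seq nat) : nat :=
  foldr muln 1 (mkseq (fun a => 'C(nth 0 e a, nth 0 l a)) 5).

Definition sq_terms (i : nat) (e : seq nat) : seq (seq nat) :=
  [seq mkseq (fun a => nth 0 e a + nth 0 l a) 5 |
     l <- bounded_lists i 5 & (sumn l == i) && odd (binom_prod e l)].

Lemma Sq_mon5 i p e : Sq i 'X_[mon5 p (nth 0 e)] = mon_sum p (sq_terms i e).
Proof.
pose term (l : seq nat) : P 5 := if sumn l == i then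
  ((binom_prod e l)%:R *: 'X_[mon5 p (fun a => nth 0 e a + nth 0 l a)])%R else 0%R.
pose relabel (d : {ffun 'I_5 -> 'I_i.+1}) := [ffun j => d ((p^-1)%g j)].
have relabel_inj : injective relabel.
  move=> d1 d2 /ffunP eq12; apply/ffunP => a.
  by have := eq12 (p a); rewrite !ffunE permK.
rewrite SqX /SqMon (reindex_inj relabel_inj) big_mkcond /=.
transitivity (\sum_(d : {ffun 'I_5 -> 'I_i.+1}) term (list_of_ffun d))%R.
  apply: eq_bigr => d _; rewrite /term.
  have -> : \sum_(j < 5) (relabel d j : nat) = sumn (list_of_ffun d).
    rewrite sumnE big_map big_enum (reindex_inj (@perm_inj _ p)) /=.
    by apply: eq_bigr => a _; rewrite ffunE permK.
  case: eqP => // _; congr (_ *: 'X_[_])%R.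
    rewrite -natr_prod /binom_prod prodn_mkseq (reindex_inj (@perm_inj _ p)) /=.
    by congr (_%:R)%R; apply: eq_bigr => a _; rewrite ffunE mnmE !permK nth_list_of_ffun.
  by apply/mnmP => j; rewrite !mnmE ffunE nth_list_of_ffun.
rewrite sum_list_of_ffun /mon_sum /sq_terms big_map big_filter [RHS]big_mkcond.
apply: eq_bigr => l _; rewrite /term; case: eqP => //= _.
rewrite scale_natr_F2; case: ifP => // _.
by congr 'X_[_]; apply/mnmP => j; rewrite !mnmE nth_mkseq.
Qed.

Definition omega_list (e : seq nat) (i : nat) : nat :=
  sumn (mkseq (fun a => alpha i.-1 (nth 0 e a)) 5).

Definition deg_list (e : seq nat) : nat := sumn (mkseq (nth 0 e) 5).

Lemma omega_mon5 p e i : omega (mon5 p (nth 0 e)) i = omega_list e i.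
Proof.
rewrite /omega /omega_list sumn_mkseq (reindex_inj (@perm_inj _ p)) /=.
by apply: eq_bigr => a _; rewrite mnmE permK.
Qed.

Lemma mdeg_mon5 p e : mdeg (mon5 p (nth 0 e)) = deg_list e.
Proof.
rewrite mdegE /deg_list sumn_mkseq (reindex_inj (@perm_inj _ p)) /=.
by apply: eq_bigr => a _; rewrite mnmE permK.
Qed.

Lemma nth_mon5 p e (j : 'I_5) : nth 0 (val (mon5 p e)) j = e ((p^-1)%g j).
Proof. by rewrite -mnm_nth mnmE. Qed.

Lemma omega_list_eq0 e s i : all (fun x => x < 2 ^ s) e -> s < i -> omega_list e i = 0.
Proof.
move=> e_lt s_lt_i; rewrite /omega_list sumn_mkseq big1 // => a _.
have ea_lt : nth 0 e a < 2 ^ s.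
  have [a_lt | a_ge] := ltnP a (size e); first by apply: (allP e_lt); rewrite mem_nth.
  by rewrite nth_default // expn_gt0.
rewrite /alpha divn_small //; apply: (leq_trans ea_lt); rewrite leq_exp2l //.
by case: i s_lt_i.
Qed.

Lemma smax_mon5 p e s :
  0 < s -> 0 < omega_list e s -> all (fun x => x < 2 ^ s) e -> s < (deg_list e).+2 ->
  smax (mon5 p (nth 0 e)) = s.
Proof.
move=> s_gt0 omega_s e_lt s_lt; rewrite /smax mdeg_mon5; apply/eqP; rewrite eqn_leq.
apply/andP; split.
  apply/bigmax_leqP_seq => i _; rewrite omega_mon5 ltnNge => omega_i.
  by rewrite leqNgt; apply: contra omega_i => /(omega_list_eq0 e_lt) ->.
apply: (@leq_bigmax_seq _ _ _ id s); first by rewrite mem_index_iota s_gt0.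
by rewrite omega_mon5.
Qed.

Definition lexltb (f g : nat -> nat) (start n : nat) : bool :=
  has (fun i => all (fun l => f l == g l) (iota start (i - start)) && (f i < g i))
      (iota start n).

Lemma lexltbP f g start n : lexltb f g start n -> lexlt start f g.
Proof.
case/hasP => i; rewrite mem_iota => /andP [start_i _] /andP [/allP eq_below lt_i].
exists i; split => //; split => // l /andP [start_l l_i]; apply/eqP/eq_below.
by rewrite mem_iota start_l subnKC.
Qed.

Lemma mono_lt_omega p ev eu :
  lexltb (omega_list ev) (omega_list eu) 1 8 ->
  mono_lt (mon5 p (nth 0 ev)) (mon5 p (nth 0 eu)).
Proof.
move=> /lexltbP [i [i_ge1 [eq_below lt_i]]]; left; exists i.
by rewrite !omega_mon5; split=> //; split=> // l l_i; rewrite !omega_mon5 eq_below.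
Qed.

Lemma mono_lt_sigma (p : 'S_5) ev eu s (a : nat) (ds : seq nat) :
  a < 5 -> all (fun x => x < 2 ^ s) ev -> all (fun x => x < 2 ^ s) eu ->
  all (fun i => omega_list ev i == omega_list eu i) (iota 1 s) ->
  nth 0 ev a < nth 0 eu a ->
  all (fun b => (b \in ds) || (nth 0 ev b == nth 0 eu b)) (iota 0 5) ->
  (forall d, d \in ds -> p (inord a) <= p (inord d)) ->
  mono_lt (mon5 p (nth 0 ev)) (mon5 p (nth 0 eu)).
Proof.
move=> a_lt ev_lt eu_lt eq_omega lt_a eq_off_ds p_ds; right; split.
  move=> i i_ge1; rewrite !omega_mon5; have [i_le | s_lt] := leqP i s.
    by apply/eqP/(allP eq_omega); rewrite mem_iota i_ge1 add1n ltnS.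
  by rewrite !(omega_list_eq0 _ s_lt).
exists (p (inord a)); split => //; split; last by rewrite !nth_mon5 permK inordK.
move=> l /andP [_ l_lt]; have l5 : l < 5 := ltn_trans l_lt (ltn_ord _).
rewrite -[l]/(Ordinal l5 : nat) !nth_mon5; set b := (p^-1)%g (Ordinal l5).
apply/eqP; apply: contraTT l_lt => neq_b; rewrite -leqNgt.
have b_iota : (b : nat) \in iota 0 5 by rewrite mem_iota ltn_ord.
have := allP eq_off_ds b b_iota; rewrite (negPf neq_b) orbF => /p_ds.
by rewrite inord_val permKV.
Qed.

Lemma strictly_inadmissible_mon5 p e (smaller : seq (seq nat)) s :
  smax (mon5 p (nth 0 e)) = s.+1 ->
  all (fun l => deg_list l == deg_list e) smaller ->
  (forall l, l \in smaller -> mono_lt (mon5 p (nth 0 l)) (mon5 p (nth 0 e))) ->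
  hitA s (mon_sum p (e :: smaller)) ->
  strictly_inadmissible (mon5 p (nth 0 e)).
Proof.
move=> smax_e deg_eq lt_e hit; exists [seq mon5 p (nth 0 l) | l <- smaller].
split; last by rewrite smax_e -mon_sum_cons.
move=> _ /mapP [l l_in ->]; rewrite !mdeg_mon5.
by split; [apply/eqP/(allP deg_eq) | apply: lt_e].
Qed.

Lemma strictly_inadmissible_21333 (p : 'S_5) :
  p (inord 0) < p (inord 1) -> strictly_inadmissible (mon5 p (nth 0 [:: 2; 1; 3; 3; 3])).
Proof.
move=> lt01; pose smaller :=
  [:: [:: 1; 2; 3; 3; 3]; [:: 1; 1; 4; 3; 3]; [:: 1; 1; 3; 4; 3]; [:: 1; 1; 3; 3; 4]].
apply: (@strictly_inadmissible_mon5 _ _ smaller 1).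
- by apply: smax_mon5; vm_compute.
- by vm_compute.
- move=> l; rewrite !inE => /or4P [] /eqP ->; try by apply: mono_lt_omega; vm_compute.
  apply: (@mono_lt_sigma _ _ _ 2 0 [:: 0; 1]) => // d.
  by rewrite !inE => /orP [] /eqP -> //; exact: ltnW.
rewrite -(@perm_mon_sum p (sq_terms 1 [:: 1; 1; 3; 3; 3])); last by vm_compute.
by rewrite -Sq_mon5; apply: (@hitAw _ _ [:: 1]).
Qed.

Lemma strictly_inadmissible_34377 (p : 'S_5) :
  p (inord 0) < p (inord 1) < p (inord 2) ->
  strictly_inadmissible (mon5 p (nth 0 [:: 3; 4; 3; 7; 7])).
Proof.
case/andP=> lt01 lt12; pose by_omega :=
  [:: [:: 2; 3; 3; 8; 8]; [:: 2; 3; 4; 7; 8]; [:: 2; 3; 4; 8; 7]; [:: 2; 4; 3; 7; 8];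
      [:: 2; 4; 3; 8; 7]; [:: 2; 4; 4; 7; 7]; [:: 2; 3; 3; 7; 9]; [:: 2; 3; 3; 9; 7];
      [:: 3; 3; 3; 7; 8]; [:: 3; 3; 3; 8; 7]].
pose by_sigma := [:: [:: 2; 3; 5; 7; 7]; [:: 2; 5; 3; 7; 7]; [:: 3; 3; 4; 7; 7]].
apply: (@strictly_inadmissible_mon5 _ _ (by_omega ++ by_sigma) 2).
- by apply: smax_mon5; vm_compute.
- by vm_compute.
- move=> l; rewrite mem_cat => /orP [l_omega | ].
    have lt_omega : all (fun l => lexltb (omega_list l) (omega_list [:: 3; 4; 3; 7; 7]) 1 8)
      by_omega by vm_compute.
    exact/mono_lt_omega/(allP lt_omega _ l_omega).
  have p0_le d : d \in [:: 0; 1; 2] -> p (inord 0) <= p (inord d).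
    by rewrite !inE => /or3P [] /eqP -> //; rewrite ltnW // (ltn_trans lt01).
  rewrite !inE => /or3P [] /eqP ->.
  + exact: (@mono_lt_sigma _ _ _ 3 0 [:: 0; 1; 2]).
  + exact: (@mono_lt_sigma _ _ _ 3 0 [:: 0; 1; 2]).
  + apply: (@mono_lt_sigma _ _ _ 3 1 [:: 1; 2]) => // d.
    by rewrite !inE => /orP [] /eqP -> //; exact: ltnW.
rewrite -(@perm_mon_sum p (cancel_pairs (sq_terms 2 [:: 2; 3; 3; 7; 7] ++
                                          sq_terms 1 [:: 3; 3; 3; 7; 7]))); last by vm_compute.
rewrite mon_sum_cancel_pairs mon_sum_cat -!Sq_mon5.
by apply: hitAD; [apply: (@hitAw _ _ [:: 2]) | apply: (@hitAw _ _ [:: 1])].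
Qed.

Theorem lemma3p7 :
  forall p : 'S_5,
    ((p ord0 < p (inord 1))%N ->
       strictly_inadmissible
         (mon5 p (fun a => nth 0%N [:: 2; 1; 3; 3; 3]%N a))) /\
    ((p ord0 < p (inord 1) < p (inord 2))%N ->
       strictly_inadmissible
         (mon5 p (fun a => nth 0%N [:: 3; 4; 3; 7; 7]%N a))).
Proof.
move=> p; rewrite -(inord_val ord0).
by split; [exact: strictly_inadmissible_21333 | exact: strictly_inadmissible_34377].
Qed.
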